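(* Let $\Gamma$ be a $G$-distance-transitive graph of diameter $d$ with intersection array $\{b_0,\dots,b_{d-1};c_1,\dots,c_d\}$, and let $X,Y$ be vertices with $d(X,Y)=d$. Then $\Gamma$ is $G$-geodesic-transitive if and only if the stabilizer in $G$ of the ordered pair $(X,Y)$ acts transitively on the set $\mathcal{L}_{XY}$ of geodesics from $X$ to $Y$. Moreover, $|\mathcal{L}_{XY}|=c_1c_2\cdots c_d$.
   Context: All graphs are finite, simple, undirected, connected. A geodesic of length $\ell$ from $X$ to $Y$ is a vertex sequence $(X=v_0,\dots,v_\ell=Y)$ with consecutive vertices adjacent and $d(X,Y)=\ell$. For $G\le\mathrm{Aut}\,\Gamma$, $\Gamma$ is $G$-distance-transitive if $G$ is transitive on ordered pairs of vertices at distance $i$ for each $i$, and $G$-geodesic-transitive if $G$ is transitive on the set of geodesics of length $\ell$ for each $\ell\ge1$. The intersection array: for any $X,Y$ at distance $i$, exactly $c_i$ neighbours of $X$ lie at distance $i-1$ from $Y$ and exactly $b_i$ at distance $i+1$ from $Y$. *)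

From mathcomp Require Import all_boot all_order all_fingroup.
Set Implicit Arguments. Unset Strict Implicit. Unset Printing Implicit Defensive.

Section Graphs.
Variables (V : finType) (e : rel V).

Definition simple_graph := symmetric e /\ irreflexive e.
Definition connected_graph := forall x y : V, connect e x y.

Definition walkn (n : nat) (x y : V) : bool :=
  [exists p : n.-tuple V, path e x p && (last x p == y)].

(* distance: least n with a walk of length n from x to y; in a connected
   graph such an n is < #|V|, so searching [0, #|V|) is exact. *)
Definition dist (x y : V) : nat :=
  find (fun n => walkn n x y) (iota 0 #|V|).

Definition diameter : nat := \max_(x : V) \max_(y : V) dist x y.

Definition geodesic (s : seq V) : bool :=
  if s is x :: p then path e x p && (size p == dist x (last x p)) else false.

Definition geodesics_between (x y : V) : {set (dist x y).+1.-tuple V} :=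
  [set t : (dist x y).+1.-tuple V |
     geodesic t && (head x t == x) && (last x t == y)].

Definition acts_by_automorphisms (G : {group {perm V}}) :=
  forall g, g \in G -> forall x y, e (g x) (g y) = e x y.

Definition distance_transitive (G : {group {perm V}}) :=
  forall x y x' y', dist x y = dist x' y' ->
    exists2 g, g \in G & g x = x' /\ g y = y'.

(* transitive on geodesics of each length l >= 1 (i.e. l+1 >= 2 vertices) *)
Definition geodesic_transitive (G : {group {perm V}}) :=
  forall s t : seq V, geodesic s -> geodesic t -> size s = size t ->
    2 <= size s -> exists2 g, g \in G & map g s = t.

Definition stab_transitive_on_geodesics (G : {group {perm V}}) (x y : V) :=
  forall s t, s \in geodesics_between x y -> t \in geodesics_between x y ->
    exists2 g, g \in G & [/\ g x = x, g y = y & map g s = t].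

Definition intersection_numbers_c (c : nat -> nat) :=
  forall i x y, 1 <= i <= diameter -> dist x y = i ->
    #|[set z | e x z && (dist z y == i.-1)]| = c i.

End Graphs.

From mathcomp Require Import all_boot all_order all_fingroup zify.
Set Implicit Arguments. Unset Strict Implicit. Unset Printing Implicit Defensive.

(* A geodesic from x to y is a walk of length i = d(x, y), and its first step
   goes to one of the c_i neighbours z of x with d(z, y) = i - 1; so by
   induction |L_xy| = c_i * (c_1 ... c_(i-1)).  As d(X, Y) is the
   diameter, distance-transitivity moves every geodesic onto an initial segment
   of a geodesic from X to Y, so transitivity of G_XY on L_XY propagates to
   geodesics of every length. *)

Section Walks.
Variables (V : finType) (e : rel V).

Definition walks n (x y : V) : {set n.-tuple V} :=
  [set p : n.-tuple V | path e x p && (last x p == y)].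

Lemma walknP n x y :
  reflect (exists p, [/\ size p = n, path e x p & last x p = y]) (walkn e n x y).
Proof.
apply: (iffP existsP) => [[p /andP[p_path /eqP p_last]] | [p [size_p p_path p_last]]].
  by exists p; rewrite size_tuple.
by subst n; exists (in_tuple p); rewrite /= p_path p_last eqxx.
Qed.

Lemma walkn_edge x y : e x y -> walkn e 1 x y.
Proof. by move=> exy; apply/walknP; exists [:: y]; rewrite /= exy. Qed.

Lemma walkn_cat m n x y z : walkn e m x y -> walkn e n y z -> walkn e (m + n) x z.
Proof.
case/walknP=> p [size_p p_path p_last] /walknP[q [size_q q_path q_last]].
by apply/walknP; exists (p ++ q); rewrite size_cat size_p size_q cat_path last_cat p_last p_path.
Qed.

Lemma dist_le_walkn n x y : walkn e n x y -> dist e x y <= n.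
Proof.
move=> walk_n; rewrite leqNgt; apply/negP => lt_n_dist.
have dist_le : dist e x y <= #|V| by rewrite /dist -{2}(size_iota 0 #|V|) find_size.
have := before_find 0 lt_n_dist.
by rewrite nth_iota ?add0n ?walk_n // (leq_trans lt_n_dist).
Qed.

Lemma dist_le_diameter x y : dist e x y <= diameter e.
Proof. exact: leq_trans (leq_bigmax y) (leq_bigmax x). Qed.

Lemma walks_eq0 n x y : n < dist e x y -> walks n x y = set0.
Proof.
move=> lt_n_dist; apply/setP => p; rewrite !inE; apply/negP => /andP[p_path /eqP p_last].
have /dist_le_walkn : walkn e n x y by apply/walknP; exists p; rewrite size_tuple.
by rewrite leqNgt lt_n_dist.
Qed.

Lemma mem_imset_cons n z z' (q : n.-tuple V) (A : {set n.-tuple V}) :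
  (cons_tuple z' q \in cons_tuple z @: A) = (z' == z) && (q \in A).
Proof.
by apply/imsetP/andP => [[q' A_q' [-> /val_inj ->]] | [/eqP -> A_q]]; last exists q.
Qed.

Lemma cons_tuple_inj n (z : V) : injective (@cons_tuple n V z).
Proof. by move=> q q' [/val_inj]. Qed.

Lemma card_walksS n x y : #|walks n.+1 x y| = \sum_(z | e x z) #|walks n z y|.
Proof.
rewrite -sum1_card (partition_big (@thead n V) predT) //= [RHS]big_mkcond /=.
apply: eq_bigr => z _; rewrite sum1dep_card.
have -> : [set t | (t \in walks n.+1 x y) && (thead t == z)] =
          if e x z then cons_tuple z @: walks n z y else set0.
  apply/setP => t; case/tupleP: t => z' q.
  rewrite !inE theadE /= -andbA; case: (eqVneq z' z) => [-> | ne_z'z].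
    by case: (e x z); rewrite ?mem_imset_cons ?eqxx ?inE ?andbT.
  by case: (e x z); rewrite ?mem_imset_cons ?inE ?(negPf ne_z'z) ?andbF.
by case: (e x z); rewrite ?cards0 // card_imset //; apply: cons_tuple_inj.
Qed.

Lemma geodesics_between_walks x y :
  geodesics_between e x y = cons_tuple x @: walks (dist e x y) x y.
Proof.
apply/setP => t; case/tupleP: t => x0 p; rewrite !inE mem_imset_cons inE /=.
case: (eqVneq x0 x) => [-> | _]; last by rewrite !andbF.
case: (eqVneq (last x p) y) => [-> | _]; last by rewrite !andbF.
by rewrite size_tuple !eqxx !andbT.
Qed.

Lemma geodesic_geodesics_between x y t : t \in geodesics_between e x y -> geodesic e t.
Proof. by rewrite inE => /andP[/andP[]]. Qed.

Section Connected.
Hypothesis connected : connected_graph e.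

Lemma walkn_dist x y : walkn e (dist e x y) x y.
Proof.
have has_walk : has (fun n => walkn e n x y) (iota 0 #|V|).
  case/connectP: (connected x y) => p p_path ->.
  case/shortenP: p_path => p' p'_path p'_uniq _.
  apply/hasP; exists (size p'); last by apply/walknP; exists p'.
  by rewrite mem_iota /=; have := max_card (mem (x :: p')); rewrite (card_uniqP p'_uniq).
have := nth_find 0 has_walk.
by rewrite has_find size_iota in has_walk; rewrite nth_iota.
Qed.

Lemma dist_triangle x y z : dist e x z <= dist e x y + dist e y z.
Proof. exact/dist_le_walkn/walkn_cat/walkn_dist/walkn_dist. Qed.

Lemma dist_last_take_geodesic x p l :
  geodesic e (x :: p) -> l <= size p -> dist e x (last x (take l p)) = l.
Proof.
move=> /andP[p_path /eqP size_p] l_le; set v := last x (take l p).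
have /andP[take_path drop_path] : path e x (take l p) && path e v (drop l p).
  by rewrite -cat_path cat_take_drop.
apply/eqP; rewrite eqn_leq; apply/andP; split.
  by apply/dist_le_walkn/walknP; exists (take l p); rewrite size_takel.
have /dist_le_walkn : walkn e (size p - l) v (last x p).
  by apply/walknP; exists (drop l p); rewrite size_drop -last_cat cat_take_drop.
have := dist_triangle x v (last x p); rewrite -size_p; lia.
Qed.

Lemma card_walks_dist (c : nat -> nat) n x y :
  intersection_numbers_c e c -> dist e x y = n ->
  #|walks n x y| = \prod_(1 <= i < n.+1) c i.
Proof.
move=> c_numbers; elim: n x y => [|n IH] x y dist_xy.
  have /walknP[p [size_p _ <-]] := walkn_dist x y.
  rewrite (size0nil (etrans size_p dist_xy)) /=.
  have -> : walks 0 x x = setT by apply/setP => t; rewrite !inE (tuple0 t) /= eqxx.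
  by rewrite cardsT card_tuple big_geq.
have card_walks_from z : e x z ->
    #|walks n z y| = if dist e z y == n then \prod_(1 <= i < n.+1) c i else 0.
  move=> exz; case: eqVneq => [dist_zy | ne_dist]; first exact: IH.
  rewrite walks_eq0 ?cards0 // ltn_neqAle eq_sym ne_dist /=.
  by have := dist_le_walkn (walkn_cat (walkn_edge exz) (walkn_dist z y)); rewrite dist_xy.
rewrite card_walksS (eq_bigr _ card_walks_from) -big_mkcondr sum_nat_cond_const.
rewrite (c_numbers _ _ _ _ dist_xy); last by rewrite ltn0Sn -dist_xy dist_le_diameter.
by rewrite [RHS]big_nat_recr //= mulnC.
Qed.

Lemma card_geodesics_between (c : nat -> nat) x y :
  intersection_numbers_c e c ->
  #|geodesics_between e x y| = \prod_(1 <= i < (dist e x y).+1) c i.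
Proof.
move=> c_numbers; rewrite geodesics_between_walks card_imset; last exact: cons_tuple_inj.
exact: card_walks_dist.
Qed.

End Connected.

Lemma geodesic_transitive_stab (G : {group {perm V}}) x y :
  geodesic_transitive e G -> stab_transitive_on_geodesics e G x y.
Proof.
move=> G_gt s t L_s L_t.
have [s_geo t_geo] := (geodesic_geodesics_between L_s, geodesic_geodesics_between L_t).
move: L_s L_t s_geo t_geo; rewrite !geodesics_between_walks.
case/imsetP=> p /[!inE] /andP[_ /eqP p_last] -> /imsetP[q /[!inE] /andP[_ /eqP q_last] ->].
move=> s_geo t_geo.
have [g G_g /= [g_x g_p]] : exists2 g, g \in G & map g (x :: p) = x :: q.
  case: (posnP (dist e x y)) => [dist0 | dist_gt0]; last first.
    by apply: G_gt s_geo t_geo _ _; rewrite /= ?size_tuple.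
  have [-> ->] : tval p = [::] /\ tval q = [::].
    by split; apply/size0nil; rewrite size_tuple.
  by exists 1%g; rewrite ?group1 //= perm1.
exists g => //; split; rewrite /= ?g_x ?g_p //.
by rewrite -{1}p_last -last_map g_x g_p q_last.
Qed.

End Walks.

Section DiametralGeodesics.
Variables (V : finType) (e : rel V) (G : {group {perm V}}) (X Y : V).
Hypotheses (connected : connected_graph e) (G_aut : acts_by_automorphisms e G)
  (G_dt : distance_transitive e G) (XY_diametral : dist e X Y = diameter e).

Lemma geodesic_into_diametral s : geodesic e s ->
  exists2 h, h \in G & exists2 t, t \in geodesics_between e X Y & map h s = take (size s) t.
Proof.
case: s => [|x0 ps] // s_geo; have /andP[ps_path /eqP size_ps] := s_geo.
have /walknP[p [size_p p_path p_last]] := walkn_dist connected X Y.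
have l_le : size ps <= size p by rewrite size_p XY_diametral size_ps dist_le_diameter.
set v := last X (take (size ps) p).
have p_geo : geodesic e (X :: p) by rewrite /= p_path p_last size_p eqxx.
have dist_Xv := dist_last_take_geodesic connected p_geo l_le.
have [g G_g [g_x0 g_last]] := G_dt (etrans (esym size_ps) (esym dist_Xv)).
exists g => //.
have gps_path : path e X (map g ps) by rewrite -g_x0 path_map (eq_path (G_aut G_g)).
have gps_last : last X (map g ps) = v by rewrite -g_x0 last_map g_last.
have /andP[_ drop_path] : path e X (take (size ps) p) && path e v (drop (size ps) p).
  by rewrite -cat_path cat_take_drop.
have size_w : size (map g ps ++ drop (size ps) p) == dist e X Y.
  by rewrite size_cat size_map size_drop subnKC // size_p.
exists (cons_tuple X (Tuple size_w)).
  rewrite geodesics_between_walks imset_f // inE /= cat_path gps_path gps_last drop_path.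
  by rewrite last_cat gps_last -last_cat cat_take_drop p_last eqxx.
by rewrite /= take_size_cat ?size_map ?g_x0.
Qed.

Lemma stab_transitive_geodesic_transitive :
  stab_transitive_on_geodesics e G X Y -> geodesic_transitive e G.
Proof.
move=> G_st s t s_geo t_geo size_st _.
have [h1 G_h1 [s' L_s' s_pref]] := geodesic_into_diametral s_geo.
have [h2 G_h2 [t' L_t' t_pref]] := geodesic_into_diametral t_geo.
have [k G_k [_ _ k_s't']] := G_st _ _ L_s' L_t'.
exists (h1 * k * h2^-1)%g; first by rewrite !groupM ?groupV.
have -> : map (h1 * k * h2^-1)%g s = map h2^-1%g (map k (map h1 s)).
  by rewrite -!map_comp; apply: eq_map => z; rewrite /= !permM.
by rewrite s_pref map_take k_s't' size_st -t_pref mapK //; apply: permK.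
Qed.

End DiametralGeodesics.

Theorem lemma3p1 (V : finType) (e : rel V) (G : {group {perm V}})
  (c : nat -> nat) (d : nat) (X Y : V) :
  simple_graph e -> connected_graph e ->
  acts_by_automorphisms e G -> distance_transitive e G ->
  d = diameter e -> intersection_numbers_c e c ->
  dist e X Y = d ->
  (geodesic_transitive e G <-> stab_transitive_on_geodesics e G X Y) /\
  #|geodesics_between e X Y| = \prod_(1 <= i < d.+1) c i.
Proof.
move=> _ connected G_aut G_dt -> c_numbers dist_XY.
split; last by rewrite (card_geodesics_between connected _ _ c_numbers) dist_XY.
split; first exact: geodesic_transitive_stab.
exact: stab_transitive_geodesic_transitive.
Qed.
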